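(* Let $G$ be a graph with maximum degree $2$ and $k$ a positive integer. If $G$ has exactly one path component with at least $k-1$ vertices and $0\le s(G,P_k)\le k$, then $G$ has no cycle with more than $k$ vertices, and its unique path component with at least $k-1$ vertices has $s(G,P_k)+k-1$ vertices.
   Context: $P_k$ is the path with $k$ vertices; $s(G,H)$ is the number of vertex subsets $X\subseteq V(G)$ such that $G[X]$ is isomorphic to $H$. *)

(* A finite simple graph is a symmetric irreflexive
   relation e : rel T on a finType T. *)
From mathcomp Require Import all_boot.
Set Implicit Arguments. Unset Strict Implicit. Unset Printing Implicit Defensive.

Definition deg (T : finType) (e : rel T) (x : T) : nat := #|[set y | e x y]|.

Definition maxdeg (T : finType) (e : rel T) : nat := \max_(x : T) deg e x.

Definition path_rel (k : nat) : rel 'I_k :=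
  fun i j => (i.+1 == j :> nat) || (j.+1 == i :> nat).

Definition induced_iso (T U : finType) (e : rel T) (h : rel U) (X : {set T}) : bool :=
  [exists f : {ffun U -> T},
     [&& injectiveb f, (f @: [set: U]) == X &
         [forall u, forall v, e (f u) (f v) == h u v]]].

Definition s_count (T U : finType) (e : rel T) (h : rel U) : nat :=
  #|[set X : {set T} | induced_iso e h X]|.

Definition components (T : finType) (e : rel T) : {set {set T}} :=
  [set [set y | connect e x y] | x : T].

Definition path_component (T : finType) (e : rel T) (C : {set T}) : bool :=
  (C \in components e) && induced_iso e (@path_rel #|C|) C.

Definition has_cycle_len (T : finType) (e : rel T) (c : nat) : Prop :=
  3 <= c /\ exists f : 'I_c -> T, injective f /\
    forall i : 'I_c, forall j : 'I_c, (j : nat) = (i.+1 %% c) -> e (f i) (f j).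

From mathcomp Require Import all_boot zify.
Set Implicit Arguments. Unset Strict Implicit. Unset Printing Implicit Defensive.

(* In a graph of maximum degree 2 every component is an induced
   path or an induced cycle: a longest path through a vertex is closed under
   adjacency (by maximality at its ends and by the degree bound inside).  A
   cycle with c > k vertices contains k + 1 distinct induced copies of P_k
   (windows of k consecutive vertices), so s(G,P_k) <= k rules out long
   cycles.  An induced P_k is connected, hence lies in one component; it
   cannot fill a cycle with at most k vertices, and a path component holding
   it has at least k vertices, so it lies in the unique long path component C.
   Inside a path on n vertices the induced copies of P_k are exactly the
   n - k + 1 windows, whence |C| = s(G,P_k) + k - 1. *)

Lemma unit_steps_lipschitz (v : nat -> nat) k :
  (forall j, j < k -> (v j).+1 = v j.+1 \/ (v j.+1).+1 = v j) ->
  forall i l, i <= k -> l <= k -> v l <= v i + (l - i) + (i - l).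
Proof.
move=> v_step.
suff near i l : i <= l <= k -> v l <= v i + (l - i) /\ v i <= v l + (l - i).
  move=> i l le_ik le_lk.
  by case: (leqP i l) => [le_il | /ltnW le_li]; [have := near i l | have := near l i]; lia.
elim: l => [|l IHl] /andP[le_il le_lk]; first by rewrite (_ : i = 0); lia.
case: (ltnP i l.+1) => [lt_il | ?]; last by rewrite (_ : i = l.+1); lia.
by have := IHl (_ : i <= l <= k); have := v_step l le_lk; lia.
Qed.

(* The values of [g] move by one between consecutive indices, so they stay
   within k - 1 of their minimum m; being k distinct values, they fill
   [m, m + k). *)
Lemma path_rel_embedding_interval k n (g : 'I_k -> 'I_n) :
  0 < k -> injective g -> (forall a b, path_rel (g a) (g b) = path_rel a b) ->
  exists2 m, m + k <= n & g @: setT = [set i : 'I_n | m <= i < m + k].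
Proof.
case: k g => [//|k] g _ g_inj gE.
pose v j := g (inord j) : nat.
have v_step j : j < k -> (v j).+1 = v j.+1 \/ (v j.+1).+1 = v j.
  move=> lt_j; have lt_j' : j < k.+1 by apply: ltnW.
  have := gE (inord j) (inord j.+1); rewrite /path_rel !inordK ?eqxx //=.
  by case/orP=> /eqP; [left | right].
have vE (a : 'I_k.+1) : v a = g a by rewrite /v inord_val.
case: (arg_minnP (fun a => g a : nat) (isT : predT ord0)) => a_min _ min_le.
set m := g a_min : nat.
have le_g b : m <= g b <= m + k.
  rewrite min_le //=; have := unit_steps_lipschitz v_step (ltn_ord a_min) (ltn_ord b).
  by rewrite !vE; have := ltn_ord b; have := ltn_ord a_min; lia.
have lt_tau b : g b - m < k.+1 by have := le_g b; lia.
pose tau b := Ordinal (lt_tau b).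
have tau_inj : injective tau.
  move=> b b' /(congr1 val) /= eq_bb'; apply/g_inj/val_inj => /=.
  by have := le_g b; have := le_g b'; lia.
have tau_onto (a : 'I_k.+1) : exists b, g b = m + a :> nat.
  have /codomP[b /(congr1 val) /= tau_b] := injF_onto tau_inj a.
  by exists b; have := le_g b; lia.
exists m.
  by have [b g_b] := tau_onto ord_max; have := ltn_ord (g b); rewrite g_b /=; lia.
apply/setP => i; rewrite inE; apply/imsetP/idP => [[b _ ->] | /andP[le_mi lt_i]].
  by have := le_g b; lia.
have lt_a : i - m < k.+1 by lia.
have [b g_b] := tau_onto (Ordinal lt_a).
by exists b => //; apply/val_inj; rewrite /= g_b /=; lia.
Qed.

Section InducedPaths.
Variables (T : finType) (e : rel T).

Lemma induced_isoP (U : finType) (h : rel U) (X : {set T}) :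
  reflect (exists f : U -> T,
             [/\ injective f, f @: setT = X & forall u v, e (f u) (f v) = h u v])
          (induced_iso e h X).
Proof.
apply: (iffP existsP) => [[f] | [f [f_inj f_im fE]]].
  case/and3P=> /injectiveP f_inj /eqP f_im /forallP fE.
  by exists f; split=> // u v; apply/eqP/(forallP (fE u)).
exists [ffun u => f u]; apply/and3P; split.
- by apply/injectiveP => u v; rewrite !ffunE => /f_inj.
- by rewrite -f_im; apply/eqP/eq_imset => u; rewrite ffunE.
- by apply/forallP => u; apply/forallP => v; rewrite !ffunE fE.
Qed.

Lemma card_induced_iso (U : finType) (h : rel U) (X : {set T}) :
  induced_iso e h X -> #|X| = #|U|.
Proof. by case/induced_isoP=> f [f_inj <- _]; rewrite card_imset ?cardsT. Qed.

Section PathWindows.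
Variables (n : nat) (psi : 'I_n -> T).
Hypotheses (psi_inj : injective psi)
  (psiE : forall u v, e (psi u) (psi v) = path_rel u v).

Definition window (k m : nat) : {set T} := psi @: [set i : 'I_n | m <= i < m + k].

Lemma window_induced k m : m + k <= n -> induced_iso e (@path_rel k) (window k m).
Proof.
move=> le_mk; have lt_shift (a : 'I_k) : m + a < n by have := ltn_ord a; lia.
apply/induced_isoP; exists (fun a => psi (Ordinal (lt_shift a))); split.
- by move=> a b /psi_inj /(congr1 val) /= eq_ab; apply/val_inj => /=; lia.
- apply/setP => y; apply/imsetP/imsetP => [[a _ ->] | [i]].
    by exists (Ordinal (lt_shift a)); rewrite // inE /=; have := ltn_ord a; lia.
  rewrite inE => /andP[le_mi lt_i] ->; have lt_a : i - m < k by lia.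
  by exists (Ordinal lt_a) => //; congr psi; apply/val_inj => /=; lia.
- by move=> a b; rewrite psiE /path_rel /= -!addnS !eqn_add2l.
Qed.

Lemma window_inj k m m' : 0 < k -> m + k <= n -> m' + k <= n ->
  window k m = window k m' -> m = m'.
Proof.
move=> k_gt0 le_m le_m' /(imset_inj psi_inj) eq_w.
have first_in l l' : l + k <= n -> [set i : 'I_n | l <= i < l + k] =
    [set i : 'I_n | l' <= i < l' + k] -> l' <= l.
  move=> le_l eq_l; have lt_l : l < n by lia.
  have : Ordinal lt_l \in [set i : 'I_n | l <= i < l + k] by rewrite inE /=; lia.
  by rewrite eq_l inE => /andP[].
by apply/eqP; rewrite eqn_leq (first_in _ _ le_m' (esym eq_w)) (first_in _ _ le_m eq_w).
Qed.

Lemma induced_sub_window k (X : {set T}) : 0 < k -> X \subset psi @: setT ->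
  induced_iso e (@path_rel k) X -> exists2 m, m + k <= n & X = window k m.
Proof.
move=> k_gt0 sub_X /induced_isoP[phi [phi_inj phi_im phiE]].
have /fin_all_exists[sg psi_sg] a : exists u, psi u = phi a.
  have /(subsetP sub_X)/imsetP[u _ ->] : phi a \in X by rewrite -phi_im imset_f.
  by exists u.
have sg_inj : injective sg by move=> a b eq_ab; apply: phi_inj; rewrite -!psi_sg eq_ab.
have sgE a b : path_rel (sg a) (sg b) = path_rel a b.
  by rewrite -psiE !psi_sg phiE.
have [m le_mk sg_im] := path_rel_embedding_interval k_gt0 sg_inj sgE.
exists m => //; rewrite -phi_im /window -sg_im -imset_comp.
by apply: eq_imset => a /=; rewrite psi_sg.
Qed.

Lemma s_count_sub_path k : 0 < k ->
  (forall X : {set T}, induced_iso e (@path_rel k) X -> X \subset psi @: setT) ->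
  s_count e (@path_rel k) = n.+1 - k.
Proof.
move=> k_gt0 sub_psi.
have le_m (m : 'I_(n.+1 - k)) : m + k <= n by have := ltn_ord m; lia.
have w_inj : injective (fun m : 'I_(n.+1 - k) => window k m).
  by move=> m m' /(window_inj k_gt0 (le_m m) (le_m m')) /val_inj.
rewrite /s_count -[n.+1 - k]card_ord -(card_imset _ w_inj); apply: eq_card => X.
rewrite inE; apply/idP/imsetP => [X_iso | [m _ ->]]; last exact: window_induced.
have [m le_mk ->] := induced_sub_window k_gt0 (sub_psi X X_iso) X_iso.
have lt_m : m < n.+1 - k by lia.
by exists (Ordinal lt_m).
Qed.

End PathWindows.
End InducedPaths.

Section MaxDegreeTwo.
Variables (T : finType) (e : rel T).
Hypotheses (e_sym : symmetric e) (e_irr : irreflexive e)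
  (deg_le2 : forall x, deg e x <= 2).

Lemma third_neighbor x y z w :
  e x y -> e x z -> e x w -> y != z -> (w == y) || (w == z).
Proof.
move=> exy exz exw y_neq_z; apply/negPn/negP; rewrite negb_or => /andP[w_neq_y w_neq_z].
have: #|y |: (z |: [set w])| <= 2.
  apply: leq_trans (deg_le2 x); apply/subset_leq_card/subsetP => u.
  by rewrite !inE => /or3P[] /eqP->.
by rewrite !cardsU1 cards1 !inE negb_or y_neq_z eq_sym w_neq_y eq_sym w_neq_z.
Qed.

Section Cycle.
Variables (c : nat) (f : 'I_c -> T).
Hypotheses (f_inj : injective f)
  (f_adj : forall i j : 'I_c, (j : nat) = i.+1 %% c -> e (f i) (f j))
  (c_gt2 : 2 < c).

Let c_gt0 : 0 < c := ltnW (ltnW c_gt2).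

Definition cyc (x : nat) : T := f (Ordinal (ltn_pmod x c_gt0)).

Lemma cycE (i : 'I_c) : cyc i = f i.
Proof. by congr f; apply: val_inj; rewrite /= modn_small. Qed.

Lemma mem_cyc x : cyc x \in f @: setT.
Proof. exact: imset_f. Qed.

Lemma cyc_adj x : e (cyc x) (cyc x.+1).
Proof. by apply: f_adj; rewrite /= -[in RHS]addn1 modnDml addn1. Qed.

Lemma cycD x : cyc (x + c) = cyc x.
Proof. by congr f; apply: val_inj; rewrite /= modnDr. Qed.

Lemma cyc_inj x y : x < y + c -> y < x + c -> cyc x = cyc y -> x = y.
Proof.
wlog x_le_y : x y / x <= y => [hyp|] lt_x lt_y.
  by case: (leqP x y) => [/hyp|/ltnW /hyp h /esym /h]; [apply|lia].
move/f_inj/(congr1 val) => /= /eqP; rewrite -(subnKC x_le_y) -{1}[x]addn0.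
by rewrite eqn_modDl mod0n modn_small; lia.
Qed.

Lemma cycle_neighbor x w : e (cyc x.+1) w -> (w == cyc x.+2) || (w == cyc x).
Proof.
move=> exw; apply: (third_neighbor _ _ exw); first exact: cyc_adj.
  by rewrite e_sym; exact: cyc_adj.
by apply/eqP => /cyc_inj; lia.
Qed.

(* The first vertex of an induced path has one neighbour inside it, whereas
   every vertex of a cycle has two. *)
Lemma cycle_not_induced_path k : ~~ induced_iso e (@path_rel k) (f @: setT).
Proof.
apply/negP => iso; have := card_induced_iso iso; rewrite card_imset // cardsT !card_ord.
case: k iso => [|k] iso; first by lia.
case/induced_isoP: iso => phi [_ phi_im phiE] c_eq.
have: phi ord0 \in f @: setT by rewrite -phi_im imset_f.
case/imsetP=> i _ phi0; set x := i + c.-1.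
have cyc_x1 : cyc x.+1 = phi ord0 by rewrite /x -addnS prednK // cycD cycE.
have nbr_at1 y : e (phi ord0) y -> y \in f @: setT -> y = phi (inord 1).
  move=> e0y; rewrite -phi_im => /imsetP[u _ yu]; move: e0y.
  by rewrite yu phiE /path_rel /= orbF => /eqP u1;
     congr (phi _); apply: val_inj; rewrite /= inordK //; lia.
have := cyc_adj x.+1; have := cyc_adj x; rewrite e_sym cyc_x1.
move=> /nbr_at1 /(_ (mem_cyc _)) nbr_x /nbr_at1 /(_ (mem_cyc _)).
by rewrite -nbr_x => /cyc_inj; lia.
Qed.

(* Windows are only taken at positions [i.+1], where [cycle_neighbor] applies
   to every vertex. *)
Definition cyc_window (k i : nat) : {set T} := [set cyc (i + a) | a : 'I_k in setT].

Lemma cyc_window_induced k i : k < c -> induced_iso e (@path_rel k) (cyc_window k i.+1).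
Proof.
move=> k_lt_c; apply/induced_isoP; exists (fun a : 'I_k => cyc (i.+1 + a)); split=> // a b.
  have := ltn_ord a; have := ltn_ord b => lt_b lt_a /cyc_inj eq_ab.
  by apply/val_inj => /=; lia.
have := ltn_ord a; have := ltn_ord b; rewrite !addSn /path_rel => lt_b lt_a.
apply/idP/idP => [/cycle_neighbor /orP[] /eqP /cyc_inj | /orP[] /eqP eq_ab]; try lia.
- by have := cyc_adj (i + a).+1; rewrite -eq_ab addnS.
- by rewrite e_sym; have := cyc_adj (i + b).+1; rewrite -eq_ab addnS.
Qed.

Lemma cyc_window_inj k i j :
  k < c -> i <= k -> j <= k -> cyc_window k i.+1 = cyc_window k j.+1 -> i = j.
Proof.
wlog le_ij : i j / i <= j => [hyp k_lt_c le_i le_j eq_w|k_lt_c _ le_j eq_w].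
  by case: (leqP i j) => [/hyp|/ltnW /hyp h]; [apply | apply/esym/h].
case: (ltngtP i j) le_ij => // lt_ij _.
have: cyc j \in cyc_window k i.+1.
  have lt_a : j - i.+1 < k by lia.
  by apply/imsetP; exists (Ordinal lt_a) => //=; congr cyc; lia.
by rewrite eq_w => /imsetP[a _ /cyc_inj]; have := ltn_ord a; lia.
Qed.

Lemma cycle_s_count_gt k : 0 < k -> k < c -> k < s_count e (@path_rel k).
Proof.
move=> k_gt0 k_lt_c.
have w_inj : injective (fun i : 'I_k.+1 => cyc_window k i.+1).
  by move=> i j /(cyc_window_inj k_lt_c (ltn_ord i) (ltn_ord j)) /val_inj.
rewrite /s_count -[k.+1](card_ord k.+1) -(card_imset _ w_inj).
apply/subset_leq_card/subsetP => _ /imsetP[i _ ->]; rewrite inE.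
exact: cyc_window_induced.
Qed.

End Cycle.

Definition simple_path (s : seq T) : bool :=
  if s is a :: s' then uniq s && path e a s' else false.

Lemma simple_path_uniq s : simple_path s -> uniq s.
Proof. by case: s => // a s /andP[]. Qed.

Lemma exists_longest_simple_path x : exists p,
  [/\ simple_path p, x \in p & forall s, simple_path s -> x \in s -> size s <= size p].
Proof.
pose P n := [exists t : n.-tuple T, simple_path t && (x \in t)].
have P1 : P 1 by apply/existsP; exists [tuple x]; rewrite /= inE eqxx.
have P_bounded n : P n -> n <= #|T|.
  case/existsP=> t /andP[/simple_path_uniq uniq_t _].
  by rewrite -(size_tuple t) -(card_uniqP uniq_t) max_card.
case: (ex_maxnP (ex_intro _ 1 P1) P_bounded) => n /existsP[t /andP[t_simple x_in_t]] t_max.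
exists t; split=> // s s_simple x_in_s; rewrite size_tuple; apply: t_max.
by apply/existsP; exists (in_tuple s); rewrite s_simple.
Qed.

Section LongestPath.
Variables (x : T) (p : seq T).
Hypotheses (p_simple : simple_path p) (x_in_p : x \in p)
  (p_longest : forall s, simple_path s -> x \in s -> size s <= size p).
Local Notation n := (size p).
Local Notation q i := (nth x p i).

Lemma longest_size_gt0 : 0 < n.
Proof. by case: p x_in_p. Qed.

Lemma longest_adj j : j.+1 < n -> e (q j) (q j.+1).
Proof.
by case: p p_simple => // a s /andP[_ /(pathP x)] adj_as /adj_as.
Qed.

Lemma longest_nth_inj i j : i < n -> j < n -> q i = q j -> i = j.
Proof.
by move=> lt_i lt_j /eqP; rewrite nth_uniq ?(simple_path_uniq p_simple) // => /eqP.
Qed.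

Lemma longest_head_neighbor w : e (q 0) w -> w \in p.
Proof.
move=> e0w; apply/negPn/negP => w_notin_p.
suff: size (w :: p) <= n by rewrite ltnn.
apply: p_longest; last by rewrite inE x_in_p orbT.
case: p p_simple w_notin_p e0w => // a s /andP[uniq_as path_as] w_notin e_aw.
by apply/andP; split; [rewrite cons_uniq w_notin | rewrite /= e_sym e_aw].
Qed.

Lemma longest_last_neighbor w : e (q n.-1) w -> w \in p.
Proof.
move=> eLw; apply/negPn/negP => w_notin_p.
suff: size (rcons p w) <= n by rewrite size_rcons ltnn.
apply: p_longest; last by rewrite mem_rcons inE x_in_p orbT.
case: p p_simple w_notin_p eLw => // a s /andP[uniq_as path_as] w_notin.
rewrite (nth_last x (a :: s)) /= => e_lw.
apply/andP; split; last by rewrite rcons_path path_as.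
by rewrite -[_ && _]/(uniq (rcons (a :: s) w)) rcons_uniq w_notin.
Qed.

Lemma longest_inner_neighbor i w :
  0 < i -> i.+1 < n -> e (q i) w -> (w == q i.-1) || (w == q i.+1).
Proof.
move=> i_gt0 lt_i eiw; apply: (third_neighbor _ _ eiw).
- by rewrite e_sym; have := longest_adj (_ : i.-1.+1 < n); rewrite prednK //; apply; lia.
- exact: longest_adj.
- by apply/eqP => /longest_nth_inj; lia.
Qed.

Lemma longest_closed y w : y \in p -> e y w -> w \in p.
Proof.
move=> y_in_p; rewrite -(nth_index x y_in_p).
have: index y p < n by rewrite index_mem.
move: (index y p) => i lt_i.
have [->|[->|[i_gt0 lt_i1]]] : i = 0 \/ i = n.-1 \/ 0 < i /\ i.+1 < n by lia.
- exact: longest_head_neighbor.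
- exact: longest_last_neighbor.
- move/(longest_inner_neighbor i_gt0 lt_i1) => /orP[] /eqP ->; apply: mem_nth.
  + exact: leq_ltn_trans (leq_pred i) lt_i.
  + exact: lt_i1.
Qed.

Lemma longest_edge i j : i < n -> j < n -> e (q i) (q j) ->
  [|| i.+1 == j, j.+1 == i | (i == 0) && (j == n.-1) || (j == 0) && (i == n.-1)].
Proof.
move=> lt_i lt_j eij.
have [[i_gt0 lt_i1]|i_end] : 0 < i /\ i.+1 < n \/ i = 0 \/ i = n.-1 by lia.
  by case/orP: (longest_inner_neighbor i_gt0 lt_i1 eij) => /eqP /longest_nth_inj; lia.
have [[j_gt0 lt_j1]|j_end] : 0 < j /\ j.+1 < n \/ j = 0 \/ j = n.-1 by lia.
  rewrite e_sym in eij.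
  by case/orP: (longest_inner_neighbor j_gt0 lt_j1 eij) => /eqP /longest_nth_inj; lia.
have : i != j by apply: contraTneq eij => ->; rewrite e_irr.
lia.
Qed.

Lemma longest_connect i j : i <= j -> j < n -> connect e (q i) (q j).
Proof.
elim: j => [|j IHj] le_ij lt_j; first by have -> : i = 0 by lia.
case: (ltnP i j.+1) => [lt_ij | ?]; last by have -> : i = j.+1 by lia.
by apply: connect_trans (IHj _ _) (connect1 (longest_adj lt_j)); lia.
Qed.

Lemma longest_component : [set y | connect e x y] = [set y in p].
Proof.
apply/setP => y; rewrite !inE; apply/idP/idP => [xy | y_in_p].
  rewrite -(closed_connect _ xy) // => u w euw.
  by apply/idP/idP => /longest_closed; apply; rewrite // e_sym.
rewrite -(nth_index x x_in_p) -(nth_index x y_in_p).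
have: index y p < n by rewrite index_mem.
have: index x p < n by rewrite index_mem.
move: (index x p) (index y p) => i j lt_i lt_j.
case: (leqP i j) => [le_ij | /ltnW le_ji]; first exact: longest_connect.
by rewrite (sym_connect_sym e_sym); apply: longest_connect.
Qed.

Lemma longest_image : [set y in p] = [set q i | i : 'I_n in setT].
Proof.
apply/setP => y; rewrite inE; apply/idP/imsetP => [y_in_p | [i _ ->]].
  have lt_y : index y p < n by rewrite index_mem.
  by exists (Ordinal lt_y); rewrite ?inE //= nth_index.
exact: mem_nth.
Qed.

Lemma longest_cycle : e (q 0) (q n.-1) ->
  forall i j : 'I_n, (j : nat) = i.+1 %% n -> e (q i) (q j).
Proof.
move=> chord i j ->; have lt_i := ltn_ord i.
case: (ltnP i.+1 n) => [lt_i1 | ge_i1]; first by rewrite modn_small //; apply: longest_adj.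
have -> : (i : nat) = n.-1 by lia.
by rewrite prednK ?longest_size_gt0 // modnn e_sym.
Qed.

Lemma longest_induced_path : ~~ (e (q 0) (q n.-1) && (2 < n)) ->
  induced_iso e (@path_rel n) [set y in p].
Proof.
move=> no_chord; apply/induced_isoP; exists (fun i : 'I_n => q i); split.
- by move=> i j /longest_nth_inj eq_ij; apply/val_inj/eq_ij.
- by rewrite longest_image.
move=> i j; rewrite /path_rel.
move: (ltn_ord i) (ltn_ord j); move: (nat_of_ord i) (nat_of_ord j) => {}i {}j lt_i lt_j.
apply/idP/idP => [eij | /orP[] /eqP eq_ij].
- have := longest_edge lt_i lt_j eij.
  have : i != j by apply: contraTneq eij => ->; rewrite e_irr.
  have : (i == 0) && (j == n.-1) || (j == 0) && (i == n.-1) -> n <= 2.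
    case/orP=> /andP[/eqP i0 /eqP jL]; move: no_chord eij; rewrite i0 jL.
      by move=> no_chord' chord; move: no_chord'; rewrite chord /= -leqNgt.
    by rewrite e_sym => no_chord' chord; move: no_chord'; rewrite chord /= -leqNgt.
  lia.
- by rewrite -eq_ij; apply: longest_adj; rewrite eq_ij.
- by rewrite e_sym -eq_ij; apply: longest_adj; rewrite eq_ij.
Qed.

Lemma longest_path_or_cycle :
  path_component e [set y in p] \/
  exists c (f : 'I_c -> T), [/\ injective f,
    forall i j : 'I_c, (j : nat) = i.+1 %% c -> e (f i) (f j),
    2 < c & [set y in p] = f @: setT].
Proof.
case: (boolP (e (q 0) (q n.-1) && (2 < n))) => [/andP[chord n_gt2] | no_chord].
  right; exists n, (fun i : 'I_n => q i); split=> //; last exact: longest_image.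
  - by move=> i j /longest_nth_inj eq_ij; apply/val_inj/eq_ij.
  - exact: longest_cycle.
left; apply/andP; split.
  by rewrite -(longest_component) ; apply/imsetP; exists x.
by rewrite cardsE (card_uniqP (simple_path_uniq p_simple)); exact: longest_induced_path.
Qed.

End LongestPath.

Lemma component_path_or_cycle x :
  path_component e [set y | connect e x y] \/
  exists c (f : 'I_c -> T), [/\ injective f,
    forall i j : 'I_c, (j : nat) = i.+1 %% c -> e (f i) (f j),
    2 < c & [set y | connect e x y] = f @: setT].
Proof.
have [p [p_simple x_in_p p_longest]] := exists_longest_simple_path x.
rewrite (longest_component p_simple x_in_p p_longest).
exact: longest_path_or_cycle p_simple x_in_p p_longest.
Qed.

Lemma induced_path_connected k (X : {set T}) x :
  induced_iso e (@path_rel k) X -> x \in X -> X \subset [set y | connect e x y].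
Proof.
case/induced_isoP=> phi [_ <- phiE]; case: k phi phiE => [|k] phi phiE.
  by case/imsetP=> -[].
have reach j : j <= k -> connect e (phi ord0) (phi (inord j)).
  elim: j => [_ | j IHj lt_j].
    by rewrite (_ : inord 0 = ord0) ?connect0 //; apply: val_inj; rewrite /= inordK.
  apply: connect_trans (IHj (ltnW lt_j)) (connect1 _).
  by rewrite phiE /path_rel !inordK ?eqxx // ltnS ltnW.
have reach_any a : connect e (phi ord0) (phi a).
  by have := reach a (ltn_ord a); rewrite inord_val.
case/imsetP=> a _ ->; apply/subsetP => _ /imsetP[b _ ->]; rewrite inE.
by apply: connect_trans (reach_any b); rewrite (sym_connect_sym e_sym).
Qed.

Lemma induced_path_sub_component k C (X : {set T}) : 0 < k ->
  (forall D, path_component e D -> k <= #|D| -> D = C) ->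
  ~ (exists c, k < c /\ has_cycle_len e c) ->
  induced_iso e (@path_rel k) X -> X \subset C.
Proof.
move=> k_gt0 C_unique no_long_cycle X_iso.
have card_X : #|X| = k by rewrite (card_induced_iso X_iso) card_ord.
have [x x_in_X] : exists x, x \in X by apply/set0Pn; rewrite -card_gt0 card_X.
have X_sub := induced_path_connected X_iso x_in_X.
case: (component_path_or_cycle x) => [D_path | [c [f [f_inj f_adj c_gt2 D_eq]]]].
  by rewrite -(C_unique _ D_path) // -card_X subset_leq_card.
have c_le_k : c <= k.
  rewrite leqNgt; apply/negP => k_lt_c.
  by apply: no_long_cycle; exists c; do 2!split=> //; exists f.
have X_eq : X = f @: setT.
  by apply/eqP; rewrite eqEcard -D_eq X_sub D_eq card_imset // cardsT card_ord card_X.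
by move: X_iso; rewrite X_eq (negbTE (cycle_not_induced_path _ _ _ _)).
Qed.

End MaxDegreeTwo.

Theorem lemma4p5 (T : finType) (e : rel T) (k : nat) :
  symmetric e -> irreflexive e ->
  maxdeg e = 2 ->
  0 < k ->
  #|[set C : {set T} | path_component e C && (k.-1 <= #|C|)]| = 1 ->
  s_count e (@path_rel k) <= k ->
  (~ exists c, k < c /\ has_cycle_len e c) /\
  (forall C : {set T}, path_component e C -> k.-1 <= #|C| ->
     #|C| = s_count e (@path_rel k) + k.-1).
Proof.
move=> e_sym e_irr maxdeg2 k_gt0 unique_long s_le_k.
have deg_le2 x : deg e x <= 2 by rewrite -maxdeg2; apply: leq_bigmax.
have no_long_cycle : ~ exists c, k < c /\ has_cycle_len e c.
  case=> c [k_lt_c [c_gt2 [f [f_inj f_adj]]]].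
  have := cycle_s_count_gt e_sym deg_le2 f_inj f_adj c_gt2 k_gt0 k_lt_c.
  by rewrite ltnNge s_le_k.
split=> // C C_path C_long.
have C_unique D : path_component e D -> k <= #|D| -> D = C.
  move/eqP/cards1P: unique_long => [Z long_eq] D_path D_long.
  have long_Z B : path_component e B -> k.-1 <= #|B| -> B = Z.
    by move=> B_path B_long; apply/set1P; rewrite -long_eq inE B_path.
  by rewrite (long_Z C) // (long_Z D) // (leq_trans (leq_pred k)).
case/andP: (C_path) => _ /induced_isoP[psi [psi_inj psi_im psiE]].
have sub_C X : induced_iso e (@path_rel k) X -> X \subset psi @: setT.
  by rewrite psi_im; apply: induced_path_sub_component.
by rewrite (s_count_sub_path psi_inj psiE k_gt0 sub_C); lia.
Qed.
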